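(* Let $q$ be prime, let $[[n,n-k,d]]_q$ be a non-degenerate stabilizer code, and let $M\in\mathbb{Z}^{k\times 2n}$ be an invariant form of it with maximal absolute entry $B$. Let $d^*$ be the integer distance of $M$, i.e. the minimum weight of a nonzero integer vector $e\in\mathbb{Z}^{2n}$ with $e\odot m=0$ over $\mathbb{Z}$ for every row $m$ of $M$; then $d\le d^*\le k$. For every prime $$p> B^{2(d^*-1)}\,\bigl(2(d^*-1)\bigr)^{d^*-1},$$ the code given by $M \bmod p$ has distance exactly $d^*$, so the distance cannot be further improved by embedding into more levels. In particular, the same conclusion holds for every prime $p> B^{2(k-1)}(2(k-1))^{k-1}$.
   Context: An $n$-qudit Pauli is represented by an exponent vector $(a|b)$ (over $\mathbb{Z}_r$ for $r$ prime, or over $\mathbb{Z}$). Symplectic product: $u\odot v=\sum_{l=1}^n (v_{z,l}u_{x,l}-v_{x,l}u_{z,l})$. Weight of $(a|b)$: number of $l$ with $(a_l,b_l)\ne(0,0)$. The distance of a code over $r$ levels with generator matrix $G$ is the minimum weight of a nonzero $e\in\mathbb{Z}_r^{2n}$ symplectically orthogonal mod $r$ to every row of $G$; non-degenerate means every non-identity stabilizer group element has weight at least $d$. An invariant form of a code with generator matrix $S$ over $\mathbb{Z}_q$ is an integer matrix $M\equiv S \pmod q$ whose rows have pairwise integer symplectic product $0$. *)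

From HB Require Import structures.
From mathcomp Require Import all_boot all_order all_algebra.
Set Implicit Arguments. Unset Strict Implicit. Unset Printing Implicit Defensive.
Import Order.TTheory GRing.Theory Num.Theory.
Local Open Scope ring_scope.

(* A Pauli exponent vector (a|b) on n qudits is a row vector of length n+n:
   column [lshift n l] holds a_l (x-part), column [rshift n l] holds b_l (z-part). *)

Definition sympl {R : pzRingType} {n : nat} (u v : 'rV[R]_(n + n)) : R :=
  \sum_(l < n) (v 0 (rshift n l) * u 0 (lshift n l) - v 0 (lshift n l) * u 0 (rshift n l)).

Definition weight {R : pzRingType} {n : nat} (u : 'rV[R]_(n + n)) : nat :=
  #|[set l : 'I_n | (u 0 (lshift n l) != 0) || (u 0 (rshift n l) != 0)]|.

Definition orth_rows {R : pzRingType} {k n : nat} (G : 'M[R]_(k, n + n))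
    (e : 'rV[R]_(n + n)) : Prop :=
  forall i : 'I_k, sympl e (row i G) = 0.

(* d is the distance of G: minimum weight of a nonzero e orthogonal to all rows.
   Over R = 'F_r this is the code distance; over R = int it is the integer distance. *)
Definition code_distance {R : pzRingType} {k n : nat} (G : 'M[R]_(k, n + n))
    (d : nat) : Prop :=
  (exists e : 'rV[R]_(n + n), [/\ e != 0, orth_rows G e & weight e = d]) /\
  (forall e : 'rV[R]_(n + n), e != 0 -> orth_rows G e -> (d <= weight e)%N).

Definition stabilizer_code {F : fieldType} {k n : nat} (S : 'M[F]_(k, n + n))
    (d : nat) : Prop :=
  [/\ forall i j : 'I_k, sympl (row i S) (row j S) = 0,
      row_free S & code_distance S d].

Definition nondegenerate_code {F : fieldType} {k n : nat} (S : 'M[F]_(k, n + n))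
    (d : nat) : Prop :=
  forall c : 'rV[F]_k, c *m S != 0 -> (d <= weight (c *m S))%N.

Definition mod_mx (p : nat) {k m : nat} (M : 'M[int]_(k, m)) : 'M['F_p]_(k, m) :=
  map_mx (fun z : int => z%:~R) M.

Definition invariant_form (q : nat) {k n : nat} (M : 'M[int]_(k, n + n))
    (S : 'M['F_q]_(k, n + n)) : Prop :=
  mod_mx q M = S /\ forall i j : 'I_k, sympl (row i M) (row j M) = 0.

Definition maxabs {k m : nat} (M : 'M[int]_(k, m)) : nat :=
  (\max_(i < k) \max_(j < m) `|M i j|%N)%N.

(* Let e be a nonzero vector over F_p, orthogonal to M mod p and supported on
   t < d* qudits. The symplectic products with the rows of M, restricted to
   these qudits, form a 2t x k integer matrix A, and the restriction y of e is a
   nonzero solution of y A = 0 mod p. Over Q the rows of A are independent: a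
   rational, hence after clearing denominators integral, left kernel vector
   would extend to an integer vector of weight at most t orthogonal to M. So A
   has a nonsingular 2t x 2t minor, whose determinant is at most
   (2t B^2)^t < p in absolute value by Hadamard's inequality, hence stays
   nonzero mod p, contradicting y A = 0. Conversely, an integer vector of
   weight d* orthogonal to M can be divided by p until one entry is not
   divisible by p, and then reduces to a nonzero vector of weight at most d*.
   Reducing mod q instead gives d <= d*, and d* <= k because the 2k unknowns
   attached to any k qudits always admit a nonzero solution of the k equations. *)

From HB Require Import structures.
From mathcomp Require Import all_boot all_order all_algebra.
From mathcomp Require Import ring zify.
Set Implicit Arguments. Unset Strict Implicit. Unset Printing Implicit Defensive.
Import Order.TTheory GRing.Theory Num.Theory.
Local Open Scope ring_scope.

Definition norm2 {R : pzRingType} {m : nat} (u : 'rV[R]_m) : R :=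
  \sum_(c < m) u 0 c ^+ 2.

Lemma norm2E (R : comPzRingType) m (u : 'rV[R]_m) : norm2 u = (u *m u^T) 0 0.
Proof. by rewrite !mxE; apply: eq_bigr => c _; rewrite mxE expr2. Qed.

Section Hadamard.
Variable R : realFieldType.
Implicit Types (m j : nat).

Lemma norm2_ge0 m (u : 'rV[R]_m) : 0 <= norm2 u.
Proof. by apply: sumr_ge0 => c _; rewrite sqr_ge0. Qed.

Lemma norm2_eq0 m (u : 'rV[R]_m) : (norm2 u == 0) = (u == 0).
Proof.
apply/idP/eqP => [/eqP/psumr_eq0P u0 | ->].
  apply/rowP => c; rewrite mxE; apply/eqP; rewrite -sqrf_eq0; apply/eqP.
  by apply: u0 => // i _; rewrite sqr_ge0.
by rewrite /norm2 big1 // => c _; rewrite mxE expr0n.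
Qed.

Lemma norm2D_orth m (u v : 'rV[R]_m) :
  u *m v^T = 0 -> norm2 (u + v) = norm2 u + norm2 v.
Proof.
move=> uv; have vu : v *m u^T = 0 by rewrite -[v *m _]trmxK trmx_mul trmxK uv trmx0.
by rewrite !norm2E linearD /= mulmxDl !mulmxDr uv vu addr0 add0r mxE.
Qed.

Lemma gram_unitmx m j (A : 'M[R]_(j, m)) : (A *m A^T \in unitmx) = row_free A.
Proof.
rewrite -row_free_unit; apply/idP/idP => free.
  apply: inj_row_free => v vA; apply/eqP.
  by rewrite -(mulmx_free_eq0 _ free) mulmxA vA mul0mx.
apply: inj_row_free => v vG; apply/eqP; rewrite -(mulmx_free_eq0 _ free) -norm2_eq0.
by rewrite norm2E trmx_mul mulmxA -(mulmxA v) vG mul0mx mxE.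
Qed.

Lemma row_free_dsubmx m j (a : 'rV[R]_m) (A : 'M[R]_(j, m)) :
  row_free (col_mx a A) -> row_free A.
Proof.
move=> free; apply: inj_row_free => v vA; apply/eqP.
have := mulmx_free_eq0 (row_mx 0 v) free.
by rewrite mul_row_col mul0mx add0r vA eqxx row_mx_eq0 => /esym/andP[].
Qed.

(* [b] is [a] minus its orthogonal projection onto the row space of [A]. *)
Lemma det_gram_col_mx m j (a : 'rV[R]_m) (A : 'M[R]_(j, m)) : row_free A ->
  exists2 b : 'rV[R]_m, norm2 b <= norm2 a &
    \det (col_mx a A *m (col_mx a A)^T) = norm2 b * \det (A *m A^T).
Proof.
rewrite -gram_unitmx => uG.
set c := a *m A^T *m invmx (A *m A^T); set b := a - c *m A.
have bA : b *m A^T = 0 by rewrite mulmxBl -mulmxA mulmxKV // subrr.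
have Ab : A *m b^T = 0 by rewrite -[A *m _]trmxK trmx_mul trmxK bA trmx0.
exists b.
  have bcA : b *m (c *m A)^T = 0 by rewrite trmx_mul mulmxA bA mul0mx.
  have aE : a = b + c *m A by rewrite subrK.
  by rewrite [in leRHS]aE (norm2D_orth bcA) lerDl norm2_ge0.
set E := block_mx (1%:M : 'M[R]_1) c 0 (1%:M : 'M[R]_j).
have aAE : col_mx a A = E *m col_mx b A.
  by rewrite mul_block_col !mul1mx mul0mx add0r subrK.
have detE : \det E = 1 by rewrite det_ublock !det1 mulr1.
rewrite aAE trmx_mul mulmxA -(mulmxA E) !det_mulmx det_tr detE mul1r mulr1.
by rewrite tr_col_mx mul_col_row bA Ab det_ublock det_mx11 norm2E.
Qed.

Lemma hadamard_gram m j (A : 'M[R]_(j, m)) :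
  0 <= \det (A *m A^T) <= \prod_(i < j) norm2 (row i A).
Proof.
have prod_ge0 j' (A' : 'M[R]_(j', m)) : 0 <= \prod_(i < j') norm2 (row i A').
  by apply: prodr_ge0 => i _; apply: norm2_ge0.
elim: j A => [|j IH] A; first by rewrite det_mx00 big_ord0 ler01 lexx.
rewrite -[A](@vsubmxK _ 1 j); move: (usubmx _) (dsubmx _) => a A'.
have [free|] := boolP (row_free (col_mx a A')); last first.
  rewrite -gram_unitmx unitmxE unitfE negbK => /eqP->.
  by rewrite lexx prod_ge0.
have [b le_ba ->] := det_gram_col_mx a (row_free_dsubmx free).
have [detA'_ge0 detA'_le] := andP (IH A').
rewrite mulr_ge0 ?norm2_ge0 //=.
have -> : \prod_(i < j.+1) norm2 (row i (col_mx a A')) =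
          norm2 a * \prod_(i < j) norm2 (row i A').
  change (\prod_(i < 1 + j) norm2 (row i (col_mx a A')) =
          norm2 a * \prod_(i < j) norm2 (row i A')).
  rewrite big_split_ord big_ord1 rowKu; congr (_ * _).
    by congr norm2; apply/rowP => c; rewrite mxE.
  by apply: eq_bigr => i _; rewrite rowKd.
by apply: ler_pM; rewrite ?norm2_ge0.
Qed.
End Hadamard.

Local Notation ratmx A := (map_mx (fun z : int => z%:~R : rat) A).

Lemma intr_sqr (R : numDomainType) (x : int) : (x%:~R : R) ^+ 2 = (`|x| ^ 2)%N%:R.
Proof. by rewrite -abszX natr_absz ger0_norm ?rmorphXn // sqr_ge0. Qed.

Lemma hadamard_int m (C : 'M[int]_m) (B : nat) :
  (forall i j, `|C i j| <= B)%N -> (`|\det C| ^ 2 <= (m * B ^ 2) ^ m)%N.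
Proof.
move=> le_CB; rewrite -(ler_nat rat) -intr_sqr -det_map_mx.
have /andP[_] := hadamard_gram (ratmx C).
rewrite det_mulmx det_tr -expr2 => /le_trans; apply.
rewrite natrX -[m in _ ^+ m]card_ord -prodr_const.
apply: ler_prod => i _; rewrite norm2_ge0 /=.
apply: (@le_trans _ _ (\sum_(c < m) (B ^ 2)%N%:R)).
  by apply: ler_sum => c _; rewrite !mxE intr_sqr ler_nat leq_exp2r.
by rewrite sumr_const card_ord -mulrnA mulnC.
Qed.

Lemma rV_lrshiftP (T : Type) a b (u v : 'rV[T]_(a + b)) :
  (forall j, u 0 (lshift b j) = v 0 (lshift b j)) ->
  (forall j, u 0 (rshift a j) = v 0 (rshift a j)) -> u = v.
Proof.
move=> eq_l eq_r; apply/rowP => c; rewrite -[c]splitK.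
by case: (split c) => j; [exact: eq_l | exact: eq_r].
Qed.

Section Support.
Variables (R : pzRingType) (n : nat).
Implicit Types e : 'rV[R]_(n + n).

Definition supp e : {set 'I_n} :=
  [set l | (e 0 (lshift n l) != 0) || (e 0 (rshift n l) != 0)].

Lemma weightE e : weight e = #|supp e|.
Proof. by []. Qed.

Lemma notin_supp e l :
  l \notin supp e -> e 0 (lshift n l) = 0 /\ e 0 (rshift n l) = 0.
Proof. by rewrite inE negb_or => /andP[/negPn/eqP-> /negPn/eqP->]. Qed.

Lemma supp0_eq0 e : supp e \subset set0 -> e = 0.
Proof.
move=> /subsetP e0; have e_l l : l \notin supp e by apply/negP => /e0; rewrite inE.
by apply: rV_lrshiftP => l; rewrite mxE; case: (notin_supp (e_l l)).
Qed.

End Support.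

Section Restriction.
Variables (R : comNzRingType) (n k t : nat) (f : 'I_t -> 'I_n).
Hypothesis f_inj : injective f.
Implicit Types (M : 'M[R]_(k, n + n)) (e : 'rV[R]_(n + n)) (y : 'rV[R]_(t + t)).

Definition sympl_mx M : 'M[R]_(t + t, k) :=
  col_mx (\matrix_(j, i) M i (rshift n (f j)))
         (\matrix_(j, i) - M i (lshift n (f j))).

Definition restrict e : 'rV[R]_(t + t) :=
  row_mx (\row_j e 0 (lshift n (f j))) (\row_j e 0 (rshift n (f j))).

Definition extend y : 'rV[R]_(n + n) :=
  row_mx (\row_l if [pick j | f j == l] is Some j then y 0 (lshift t j) else 0)
         (\row_l if [pick j | f j == l] is Some j then y 0 (rshift t j) else 0).

Lemma sympl_restrict M e i : supp e \subset f @: setT ->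
  sympl e (row i M) = (restrict e *m sympl_mx M) 0 i.
Proof.
move=> /subsetP supp_e; rewrite /sympl (bigID (mem (f @: setT))) /=.
rewrite [X in _ + X]big1 ?addr0 => [|l /negP l_f]; last first.
  have /notin_supp[-> ->] : l \notin supp e by apply/negP => /supp_e.
  by rewrite !mulr0 subrr.
rewrite big_imset /=; last by move=> j1 j2 _ _ /f_inj.
rewrite mxE big_split_ord /= -big_split /=; apply: eq_big => [j|j _].
  by rewrite in_setT.
by rewrite row_mxEl row_mxEr col_mxEu col_mxEd !mxE; ring.
Qed.

Lemma supp_extend y : supp (extend y) \subset f @: setT.
Proof.
apply/subsetP => l; rewrite inE /extend row_mxEl row_mxEr !mxE.
case: pickP => [j /eqP <- _ | _]; last by rewrite eqxx.
by rewrite imset_f ?in_setT.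
Qed.

Lemma extendK : cancel extend restrict.
Proof.
move=> y; apply: rV_lrshiftP => j;
  rewrite /restrict ?row_mxEl ?row_mxEr mxE /extend ?row_mxEl ?row_mxEr mxE;
  by case: pickP => [j' /eqP/f_inj -> | /(_ j)]; rewrite ?eqxx.
Qed.

Lemma sympl_extend M y i : sympl (extend y) (row i M) = (y *m sympl_mx M) 0 i.
Proof. by rewrite sympl_restrict ?extendK ?supp_extend. Qed.

Lemma restrict0 : restrict 0 = 0.
Proof. by apply: rV_lrshiftP => j; rewrite ?row_mxEl ?row_mxEr !mxE. Qed.

Lemma extend_neq0 y : y != 0 -> extend y != 0.
Proof. by apply: contra => /eqP y0; rewrite -(extendK y) y0 restrict0. Qed.

Lemma weight_extend y : (weight (extend y) <= t)%N.
Proof.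
rewrite weightE (leq_trans (subset_leq_card (supp_extend y))) //.
by rewrite (leq_trans (leq_imset_card _ _)) // cardsT card_ord.
Qed.

Lemma restrict_neq0 e : supp e \subset f @: setT -> e != 0 -> restrict e != 0.
Proof.
move=> /subsetP supp_e; apply: contra => /eqP/rowP e0; apply/eqP/supp0_eq0.
apply/subsetP => _ /[dup] /supp_e /imsetP[j _ ->].
have := e0 (lshift t j); have := e0 (rshift t j).
by rewrite ?row_mxEl ?row_mxEr !mxE inE => -> ->; rewrite eqxx.
Qed.

End Restriction.

Section Reduction.
Variables (R S : comNzRingType) (g : {rmorphism R -> S}).

Lemma sympl_map n (u v : 'rV[R]_(n + n)) :
  sympl (map_mx g u) (map_mx g v) = g (sympl u v).
Proof.
by rewrite /sympl rmorph_sum; apply: eq_bigr => l _; rewrite !mxE rmorphB !rmorphM.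
Qed.

Lemma orth_rows_map k n (M : 'M[R]_(k, n + n)) e :
  orth_rows M e -> orth_rows (map_mx g M) (map_mx g e).
Proof. by move=> oMe i; rewrite -map_row sympl_map oMe rmorph0. Qed.

Lemma weight_map n (e : 'rV[R]_(n + n)) : (weight (map_mx g e) <= weight e)%N.
Proof.
apply: subset_leq_card; apply/subsetP => l; rewrite !inE !mxE.
by apply: contraLR; rewrite !negb_or !negbK => /andP[/eqP-> /eqP->]; rewrite rmorph0 eqxx.
Qed.

Lemma map_sympl_mx k n t (M : 'M[R]_(k, n + n)) (f : 'I_t -> 'I_n) :
  map_mx g (sympl_mx f M) = sympl_mx f (map_mx g M).
Proof.
by rewrite map_col_mx; congr col_mx; apply/matrixP => j i; rewrite !mxE ?rmorphN.
Qed.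

End Reduction.

Lemma symplZl (R : comPzRingType) n (a : R) (u v : 'rV[R]_(n + n)) :
  sympl (a *: u) v = a * sympl u v.
Proof. by rewrite /sympl mulr_sumr; apply: eq_bigr => l _; rewrite !mxE; ring. Qed.

Lemma weightZ (R : idomainType) n (a : R) (u : 'rV[R]_(n + n)) :
  a != 0 -> weight (a *: u) = weight u.
Proof. by move=> a0; apply: eq_card => l; rewrite !inE !mxE !mulf_eq0 (negbTE a0). Qed.

Lemma int_left_kernel a b (Z : 'M[int]_(a, b)) :
  ~~ row_free (ratmx Z) -> exists2 z : 'rV[int]_a, z != 0 & z *m Z = 0.
Proof.
rewrite -kermx_eq0 => /rowV0Pn[y /sub_kermxP yZ y0].
pose D := \prod_(c < a) denq (y 0 c).
pose z := \row_c (numq (y 0 c) * \prod_(c' < a | c' != c) denq (y 0 c')).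
have zE : ratmx z = D%:~R *: y.
  apply/rowP => c; rewrite !mxE /D [X in _ = X%:~R * _](bigD1 c) //=.
  by rewrite !intrM numqE; ring.
have D0 : D%:~R != 0 :> rat.
  by rewrite intr_eq0; apply/lt0r_neq0/prodr_gt0 => c _; rewrite denq_gt0.
exists z.
  apply: contra y0 => /eqP z0; move: zE; rewrite z0 map_mx0 => /esym/eqP.
  by rewrite scalemx_eq0 (negbTE D0).
have /matrixP zZ : ratmx (z *m Z) = 0 by rewrite map_mxM zE -scalemxAl yZ scaler0.
by apply/matrixP => i j; have /eqP := zZ i j; rewrite !mxE intr_eq0 => /eqP.
Qed.

Definition sumabs m (e : 'rV[int]_m) : nat := (\sum_(c < m) `|e ord0 c|)%N.

Lemma sumabs_gt0 m (e : 'rV[int]_m) : e != 0 -> (0 < sumabs e)%N.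
Proof.
case/rV0Pn => c ec; rewrite /sumabs (bigD1 c) //=.
by rewrite (leq_trans _ (leq_addr _ _)) ?absz_gt0.
Qed.

Lemma sumabsZ m (a : int) (e : 'rV[int]_m) : sumabs (a *: e) = (`|a| * sumabs e)%N.
Proof. by rewrite /sumabs big_distrr; apply: eq_bigr => c _; rewrite mxE abszM. Qed.

(* Dividing a minimal-weight vector by p while p divides all its entries
   terminates, since it decreases the l1-norm. *)
Lemma code_distance_ndvd_witness k n (M : 'M[int]_(k, n + n)) d p :
  (1 < p)%N -> code_distance M d ->
  exists e : 'rV[int]_(n + n),
    [/\ e != 0, orth_rows M e, weight e = d & exists c, ~~ (p %| e ord0 c)%Z].
Proof.
move=> p_gt1 [[e [e0 oMe we]] _]; have [N] := ubnP (sumabs e).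
elim: N e e0 oMe we => // N IH e e0 oMe we lt_eN.
case: (pickP (fun c => ~~ (p %| e ord0 c)%Z)) => [c ndvd | dvd].
  by exists e; split => //; exists c.
have p0 : p%:Z != 0 by rewrite -lt0n ltnW.
pose e' := \row_c (e ord0 c %/ p)%Z.
have eE : e = p%:Z *: e'.
  by apply/rowP => c; rewrite !mxE mulrC divzK //; apply/negbFE/dvd.
have e'0 : e' != 0 by apply: contra e0 => /eqP e'0; rewrite eE e'0 scaler0.
apply: (IH e') => //.
- move=> i; apply/eqP; have /eqP := oMe i.
  by rewrite eE symplZl mulf_eq0 (negbTE p0).
- by rewrite -we eE weightZ.
- by rewrite -ltnS (leq_trans _ lt_eN) // eE sumabsZ ltnS ltn_Pmull ?sumabs_gt0.
Qed.

Lemma int_row_free_minor m k (A : 'M[int]_(m, k)) :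
  row_free (ratmx A) -> exists g : 'I_m -> 'I_k, \det (colsub g A) != 0.
Proof.
move=> free; have full : row_full (ratmx A)^T by rewrite /row_full mxrank_tr.
exists (fullrankfun full).
have := fullrowsub_unit full; rewrite -trmx_mxsub unitmx_tr -map_mxsub.
by rewrite unitmxE det_map_mx unitfE intr_eq0.
Qed.

Lemma row_free_colsub (F : fieldType) m k k' (g : 'I_k' -> 'I_k) (A : 'M[F]_(m, k)) :
  row_free (colsub g A) -> row_free A.
Proof.
move=> free; apply: inj_row_free => v vA; apply/eqP.
rewrite -(mulmx_free_eq0 _ free) mulmx_colsub vA.
by apply/eqP/matrixP => i j; rewrite !mxE.
Qed.

Lemma leq_maxabs k m (M : 'M[int]_(k, m)) i j : (`|M i j| <= maxabs M)%N.
Proof.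
apply: leq_trans (leq_bigmax (F := fun j => `|M i j|%N) j) _.
exact: (leq_bigmax (F := fun i => \max_(j < m) `|M i j|%N) i).
Qed.

Lemma leq_maxabs_sympl_mx k n t (M : 'M[int]_(k, n + n)) (f : 'I_t -> 'I_n) c i :
  (`|sympl_mx f M c i| <= maxabs M)%N.
Proof.
rewrite -[c]splitK; case: (split c) => j /=.
  by rewrite col_mxEu mxE leq_maxabs.
by rewrite col_mxEd mxE abszN leq_maxabs.
Qed.

Lemma hadamard_bound_le t d B : (0 < t <= d)%N ->
  (((t + t) * B ^ 2) ^ (t + t) <= (B ^ (2 * d) * (2 * d) ^ d) ^ 2)%N.
Proof.
case/andP=> t_gt0 le_td.
have -> : (((t + t) * B ^ 2) ^ (t + t) = (B ^ (2 * t) * (t + t) ^ t) ^ 2)%N.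
  rewrite !expnMn -!expnM mulnC; congr (_ * _); first by rewrite -expnD; f_equal; lia.
  by rewrite muln2 addnn.
rewrite leq_exp2r // leq_mul //.
  case: B => [|B]; first by rewrite exp0n ?muln_gt0.
  by rewrite leq_pexp2l // leq_mul2l le_td orbT.
apply: (@leq_trans ((2 * d) ^ t)); first by rewrite leq_exp2r //; lia.
by rewrite leq_pexp2l //; lia.
Qed.

Section IntegerForm.
Variables (k n : nat) (M : 'M[int]_(k, n + n)) (dstar : nat).
Hypothesis dM : code_distance M dstar.

Lemma not_row_free_sympl_mx t (f : 'I_t -> 'I_n) : injective f ->
  ~~ row_free (ratmx (sympl_mx f M)) -> (dstar <= t)%N.
Proof.
move=> f_inj /int_left_kernel[z z0 zA].
have oMz : orth_rows M (extend f z) by move=> i; rewrite sympl_extend // zA mxE.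
exact: leq_trans (dM.2 _ (extend_neq0 f_inj z0) oMz) (weight_extend f z).
Qed.

Lemma mod_sympl_mx_row_free p d t (f : 'I_t -> 'I_n) :
  prime p -> injective f -> (t < dstar)%N -> (dstar - 1 <= d)%N ->
  (maxabs M ^ (2 * d) * (2 * d) ^ d < p)%N ->
  row_free (mod_mx p (sympl_mx f M)).
Proof.
case: t f => [|t] f p_pr f_inj lt_t le_d lt_p; first by rewrite -row_leq_rank.
have freeQ : row_free (ratmx (sympl_mx f M)).
  by apply: contraTT lt_t => /(not_row_free_sympl_mx f_inj); rewrite -leqNgt.
have [g detC] := int_row_free_minor freeQ.
set C := colsub g (sympl_mx f M) in detC.
have lt_detC : (`|\det C| < p)%N.
  have le_td : (0 < t.+1 <= d)%N by lia.
  have le_C i j : (`|C i j| <= maxabs M)%N by rewrite mxE leq_maxabs_sympl_mx.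
  rewrite -(@ltn_exp2r _ _ 2) // (leq_ltn_trans (hadamard_int le_C)) //.
  by rewrite (leq_ltn_trans (hadamard_bound_le _ le_td)) ?ltn_exp2r.
apply: (row_free_colsub (g := g)).
rewrite row_free_unit /mod_mx -map_mxsub unitmxE det_map_mx unitfE.
rewrite -(dvdz_pcharf (pchar_Fp p_pr)) dvdzE.
by apply: contraTN lt_detC => /dvdn_leq; rewrite absz_gt0 -leqNgt => ->.
Qed.

Lemma mod_witness p : prime p -> exists e : 'rV['F_p]_(n + n),
  [/\ e != 0, orth_rows (mod_mx p M) e & (weight e <= dstar)%N].
Proof.
move=> p_pr.
have [e [_ oMe <- [c ndvd]]] := code_distance_ndvd_witness (prime_gt1 p_pr) dM.
exists (mod_mx p e); split; [|exact: orth_rows_map | exact: weight_map].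
apply/eqP => /matrixP/(_ ord0 c); rewrite !mxE => /eqP.
by rewrite -(dvdz_pcharf (pchar_Fp p_pr)) (negbTE ndvd).
Qed.

Lemma int_distance_le_mod p d : prime p -> code_distance (mod_mx p M) d -> (d <= dstar)%N.
Proof.
move=> p_pr [_ d_min]; have [e [e0 oMe le_e]] := mod_witness p_pr.
exact: leq_trans (d_min e e0 oMe) le_e.
Qed.

Lemma mod_distance_ge p d : prime p -> (dstar - 1 <= d)%N ->
    (maxabs M ^ (2 * d) * (2 * d) ^ d < p)%N ->
  forall e : 'rV['F_p]_(n + n), e != 0 -> orth_rows (mod_mx p M) e ->
  (dstar <= weight e)%N.
Proof.
move=> p_pr le_d lt_p e e0 oMe; rewrite leqNgt; apply/negP => lt_e.
pose f := @enum_val _ (mem (supp e)).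
have f_inj : injective f := @enum_val_inj _ _.
have supp_f : supp e \subset f @: setT.
  apply/subsetP => l l_e; apply/imsetP; exists (enum_rank_in l_e l) => //.
  by rewrite /f enum_rankK_in.
have free := mod_sympl_mx_row_free p_pr f_inj lt_e le_d lt_p.
have /negP[] := restrict_neq0 supp_f e0.
rewrite -(mulmx_free_eq0 _ free); apply/eqP/rowP => i.
by rewrite /mod_mx map_sympl_mx -sympl_restrict // oMe mxE.
Qed.

Lemma mod_code_distance p d : prime p -> (dstar - 1 <= d)%N ->
    (maxabs M ^ (2 * d) * (2 * d) ^ d < p)%N ->
  code_distance (mod_mx p M) dstar.
Proof.
move=> p_pr le_d lt_p; have ge_e := mod_distance_ge p_pr le_d lt_p.
have [e [e0 oMe le_e]] := mod_witness p_pr.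
by split=> //; exists e; split=> //; apply/eqP; rewrite eqn_leq le_e ge_e.
Qed.

Lemma int_distance_le_rows : (0 < k)%N -> (dstar <= k)%N.
Proof.
move=> k_gt0; have [le_nk|lt_kn] := leqP n k.
  have [[e [_ _ <-]] _] := dM.
  by rewrite weightE (leq_trans (max_card _)) ?card_ord.
pose f := widen_ord (ltnW lt_kn).
have f_inj : injective f by move=> i j /(congr1 val) /= /val_inj.
apply: (not_row_free_sympl_mx f_inj); rewrite -row_leq_rank -ltnNge.
by rewrite (leq_ltn_trans (rank_leq_col _)) // -addn1 leq_add2l.
Qed.

End IntegerForm.

Theorem corollary2 (q n k d : nat) (S : 'M['F_q]_(k, n + n))
    (M : 'M[int]_(k, n + n)) (dstar : nat) :
  prime q -> (0 < k)%N ->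
  stabilizer_code S d -> nondegenerate_code S d ->
  invariant_form M S ->
  code_distance M dstar ->
  [/\ (d <= dstar)%N, (dstar <= k)%N,
      (forall p : nat, prime p ->
         (maxabs M ^ (2 * (dstar - 1)) * (2 * (dstar - 1)) ^ (dstar - 1) < p)%N ->
         code_distance (mod_mx p M) dstar)
    & (forall p : nat, prime p ->
         (maxabs M ^ (2 * (k - 1)) * (2 * (k - 1)) ^ (k - 1) < p)%N ->
         code_distance (mod_mx p M) dstar)].
Proof.
move=> q_pr k_gt0 [_ _ dS] _ [MS _] dM; rewrite -MS in dS.
have le_dstar_k := int_distance_le_rows dM k_gt0.
split=> // [|p p_pr|p p_pr].
- exact: int_distance_le_mod q_pr dS.
- exact: mod_code_distance.
- by apply: mod_code_distance; rewrite ?leq_sub2r.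
Qed.
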